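(* Let $(A;R)\in\mathcal C$ and $C\subseteq A$ with $C\le A$. For a closed set $F$ of the restriction $(C,\mathrm{cl}_C)$ (where $\mathrm{cl}_C(X)=\mathrm{cl}(X)\cap C$) write $\tilde F=\mathrm{cl}(F)$, its closure in $PG(A;R)$. Then for any closed sets $F_1,F_2$ of $(C,\mathrm{cl}_C)$, $\tilde F_1\cap\tilde F_2=\mathrm{cl}(F_1\cap F_2)$.
   Context: A set system is a pair $(A;R)$ where $R$ is a set of finite non-empty subsets of $A$; for $X\subseteq A$, $R[X]=\{r\in R:r\subseteq X\}$ and $\delta(X)=|X|-|R[X]|$. $\mathcal C$ is the class of finite set systems with $\delta(X)\ge0$ for all $X\subseteq A$. $X\le A$ means $\delta(X)\le\delta(X')$ for all $X\subseteq X'\subseteq A$. $d(X)=\min\{\delta(Y):X\subseteq Y\subseteq A\}$, $\mathrm{cl}(X)=\{y:d(X\cup\{y\})=d(X)\}$, and $PG(A;R)$ is the matroid $(A,\mathrm{cl})$; a closed set of a pregeometry is a set equal to its own closure. *)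

(* A finite set system (A;R) is modelled with A = the whole
   finite type T and R : {set {set T}}. *)
From mathcomp Require Import all_boot all_order all_algebra.
Set Implicit Arguments. Unset Strict Implicit. Unset Printing Implicit Defensive.
Import Order.TTheory GRing.Theory Num.Theory.

Section SetSystems.
Variable T : finType.
Implicit Types (R : {set {set T}}) (X Y : {set T}).

Definition set_system R : Prop := set0 \notin R.

Definition Rsub R X : {set {set T}} := [set r in R | r \subset X].

Definition delta R X : int := (#|X|%:Z - #|Rsub R X|%:Z)%R.

Definition inC R : Prop := set_system R /\ forall X, (0 <= delta R X)%R.

Definition self_sufficient R X : Prop :=
  forall X', X \subset X' -> (delta R X <= delta R X')%R.

(* d(X) = min { delta(Y) : X \subseteq Y \subseteq A }  (A itself is such a Y) *)
Definition dim R X : int :=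
  \big[Order.min/delta R setT]_(Y : {set T} | X \subset Y) delta R Y.

Definition cl R X : {set T} := [set y | dim R (y |: X) == dim R X].

Definition clC R (C : {set T}) X : {set T} := cl R X :&: C.

Definition closedC R (C F : {set T}) : Prop := F \subset C /\ clC R C F = F.

End SetSystems.

From Pilot Require Import Defs.
From mathcomp Require Import all_boot all_order all_algebra.
From mathcomp Require Import zify.
Import Order.TTheory GRing.Theory Num.Theory.
Set Implicit Arguments.

(* The predimension delta is submodular, with equality for X, Y
   exactly when no relation of R[X u Y] straddles X and Y.  Call M "C-tight"
   when delta(M) <= delta(M n C).  When C <= A, a set M is C-tight iff
   delta(M u C) = delta(C) and no relation straddles M and C; from this
   description C-tight sets are closed under intersection.
   Now let y be in cl(F1) n cl(F2).  Pick M_i containing F_i and y with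
   delta(M_i) = d(F_i).  Then M_i lies in cl(F_i), so M_i n C = F_i because
   F_i is closed in C; hence M_i is C-tight, since d(F_i) <= delta(F_i).
   So H = M1 n M2 is C-tight with H n C = F1 n F2 =: F, and F is closed in C,
   which forces delta(F) = d(F).  Therefore
     d(y u F) <= delta(H) <= delta(F) = d(F),
   i.e. y is in cl(F).  The reverse inclusion is monotonicity of cl. *)

(* Defs.dim is shadowed by the dimension of vector spaces from all_algebra. *)
Local Notation dim := Defs.dim.

Section Predimension.
Variables (T : finType) (R : {set {set T}}).
Implicit Types X Y Z M : {set T}.

Definition unstraddled X Y : bool :=
  Rsub R (X :|: Y) \subset Rsub R X :|: Rsub R Y.

Lemma RsubI X Y : Rsub R (X :&: Y) = Rsub R X :&: Rsub R Y.
Proof. by apply/setP => r; rewrite !inE subsetI; case: (r \in R). Qed.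

Lemma RsubU X Y : Rsub R X :|: Rsub R Y \subset Rsub R (X :|: Y).
Proof.
by apply/subsetP => r; rewrite !inE => /orP[]/andP[-> /subset_trans]->;
  rewrite ?subsetUl ?subsetUr.
Qed.

Lemma delta_submod X Y :
  (delta R (X :|: Y) + delta R (X :&: Y) <= delta R X + delta R Y)%R.
Proof.
have := cardsUI X Y; have := cardsUI (Rsub R X) (Rsub R Y).
have := subset_leq_card (RsubU X Y).
by rewrite -RsubI /delta; lia.
Qed.

Lemma delta_modularP X Y :
  (delta R (X :|: Y) + delta R (X :&: Y) == delta R X + delta R Y)%R
  = unstraddled X Y.
Proof.
have := cardsUI X Y; have := cardsUI (Rsub R X) (Rsub R Y).
have [_ eq_card] := subset_leqif_card (RsubU X Y).
rewrite /unstraddled -eq_card -RsubI /delta => hR hX.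
by apply/eqP/eqP; lia.
Qed.

(* A relation lying in (M1 n M2) u Y but not in Y lies in M1 n M2. *)
Lemma unstraddledI M1 M2 Y :
  unstraddled M1 Y -> unstraddled M2 Y -> unstraddled (M1 :&: M2) Y.
Proof.
move=> s1 s2; apply/subsetP => r; rewrite inE => /andP[rR rH].
have in_part M : unstraddled M Y -> M1 :&: M2 \subset M ->
    r \in Rsub R M :|: Rsub R Y.
  move=> sM HM; apply: (subsetP sM); rewrite inE rR.
  by apply: subset_trans rH _; rewrite setSU.
move: (in_part _ s1 (subsetIl _ _)) (in_part _ s2 (subsetIr _ _)).
rewrite !inE rR subsetI /=.
by case: (r \subset Y); rewrite ?orbT ?orbF // => -> ->.
Qed.

Lemma dim_le X Y : X \subset Y -> (dim R X <= delta R Y)%R.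
Proof. exact: bigmin_le_cond. Qed.

Lemma dim_attained X : exists2 Y : {set T}, X \subset Y & delta R Y = dim R X.
Proof.
have [Y XY Ymin] := @arg_minP _ _ _ setT (fun Y : {set T} => X \subset Y) (delta R)
  (subsetT X).
exists Y => //; apply/eqP; rewrite eq_le dim_le // andbT.
by apply/bigmin_geP; split=> [|Z /Ymin //]; apply/Ymin/subsetT.
Qed.

Lemma dim_mono X X' : X \subset X' -> (dim R X <= dim R X')%R.
Proof.
by move=> XX'; have [Y X'Y <-] := dim_attained X'; apply/dim_le/subset_trans/X'Y.
Qed.

Lemma mem_cl_witness X Y y :
  X \subset Y -> y \in Y -> (delta R Y <= dim R X)%R -> y \in cl R X.
Proof.
move=> XY yY le_d; rewrite inE eq_le (dim_mono (subsetUr _ _)) andbT.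
by apply: le_trans le_d; rewrite dim_le // subUset sub1set yY.
Qed.

Lemma cl_witness X y : y \in cl R X ->
  exists M, [/\ X \subset M, y \in M & delta R M = dim R X].
Proof.
rewrite inE => /eqP dyX; have [M yXM dM] := dim_attained (y |: X).
exists M; split; last by rewrite dM dyX.
  by apply: subset_trans yXM; apply: subsetUr.
by apply: (subsetP yXM); rewrite !inE eqxx.
Qed.

Lemma sub_cl X : X \subset cl R X.
Proof.
by apply/subsetP => x xX; rewrite inE (setUidPr _) // sub1set.
Qed.

Lemma witness_sub_cl X M : X \subset M -> delta R M = dim R X -> M \subset cl R X.
Proof.
by move=> XM dM; apply/subsetP => z zM; apply: (mem_cl_witness XM zM); rewrite dM.
Qed.

(* Monotonicity: glue a witness M for y in cl(X) to a set Z realising d(X');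
   submodularity bounds delta(M u Z) by delta(Z) = d(X'). *)
Lemma cl_mono X X' : X \subset X' -> cl R X \subset cl R X'.
Proof.
move=> XX'; apply/subsetP => y /cl_witness [M [XM yM dM]].
have [Z X'Z dZ] := dim_attained X'.
apply: (mem_cl_witness (Y := M :|: Z)); rewrite ?subsetU ?X'Z ?orbT ?inE ?yM //.
have := delta_submod M Z.
have : (dim R X <= delta R (M :&: Z))%R.
  by rewrite dim_le // subsetI XM (subset_trans XX').
by rewrite dM dZ; lia.
Qed.

Section SelfSufficient.
Variable C : {set T}.
Hypothesis C_ss : self_sufficient R C.

Definition tight M : Prop := (delta R M <= delta R (M :&: C))%R.

Lemma delta_meet_ss Z : (delta R (Z :&: C) <= delta R Z)%R.
Proof.
have := delta_submod Z C; have := C_ss (subsetUr Z C); lia.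
Qed.

Lemma tightP M : tight M -> delta R (M :|: C) = delta R C /\ unstraddled M C.
Proof.
rewrite /tight => tM; have := delta_submod M C; have := C_ss (subsetUr M C).
move=> le_C le_sub; split; first by lia.
by rewrite -delta_modularP; apply/eqP; lia.
Qed.

Lemma tightI M1 M2 : tight M1 -> tight M2 -> tight (M1 :&: M2).
Proof.
move=> /tightP[d1 s1] /tightP[d2 s2].
have := delta_submod (M1 :|: C) (M2 :|: C); rewrite -setUIl d1 d2.
have := C_ss (subset_trans (subsetUr M1 C) (subsetUl _ (M2 :|: C))).
move/eqP: (unstraddledI s1 s2); rewrite -delta_modularP => /eqP.
rewrite /tight; lia.
Qed.

Lemma witness_meet_C F M :
  closedC R C F -> F \subset M -> delta R M = dim R F -> M :&: C = F.
Proof.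
move=> [FC clF] FM dM; apply/eqP; rewrite eqEsubset subsetI FM FC andbT.
by rewrite -{1}clF setSI // witness_sub_cl.
Qed.

Lemma closedC_delta F : closedC R C F -> delta R F = dim R F.
Proof.
move=> clF; have [Z FZ dZ] := dim_attained F.
apply/eqP; rewrite eq_le dim_le // andbT -dZ -(witness_meet_C clF FZ dZ).
exact: delta_meet_ss.
Qed.

Lemma witness_tight F M :
  closedC R C F -> F \subset M -> delta R M = dim R F -> tight M.
Proof.
by move=> clF FM dM; rewrite /tight (witness_meet_C clF FM dM) (closedC_delta clF) dM.
Qed.

End SelfSufficient.

Lemma closedCI C F1 F2 :
  closedC R C F1 -> closedC R C F2 -> closedC R C (F1 :&: F2).
Proof.
move=> [F1C cl1] [F2C cl2]; split; first by rewrite subIset ?F1C.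
have := setSI C (cl_mono (subsetIl F1 F2)); have := setSI C (cl_mono (subsetIr F1 F2)).
rewrite /clC in cl1 cl2 *; rewrite cl1 cl2 => sub2 sub1.
by apply/eqP; rewrite eqEsubset !subsetI sub1 sub2 sub_cl subIset ?F1C.
Qed.

End Predimension.

Theorem theorem6p5 (T : finType) (R : {set {set T}}) (C F1 F2 : {set T}) :
  inC R -> self_sufficient R C ->
  closedC R C F1 -> closedC R C F2 ->
  cl R F1 :&: cl R F2 = cl R (F1 :&: F2).
Proof.
move=> _ C_ss clF1 clF2; apply/eqP; rewrite eqEsubset [X in _ && X]subsetI.
rewrite (cl_mono R (subsetIl _ _)) (cl_mono R (subsetIr _ _)) !andbT.
apply/subsetP => y; rewrite inE => /andP[/cl_witness[M1 [F1M1 yM1 dM1]]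
                                        /cl_witness[M2 [F2M2 yM2 dM2]]].
have meet1 := witness_meet_C clF1 F1M1 dM1.
have meet2 := witness_meet_C clF2 F2M2 dM2.
have tH : tight R C (M1 :&: M2).
  exact: (tightI C_ss (witness_tight C_ss clF1 F1M1 dM1)
                      (witness_tight C_ss clF2 F2M2 dM2)).
have HC : M1 :&: M2 :&: C = F1 :&: F2.
  by rewrite -meet1 -meet2 setIACA setIid.
apply: (mem_cl_witness R (setISS F1M1 F2M2)); first by rewrite inE yM1.
by rewrite -(closedC_delta C_ss (closedCI clF1 clF2)) -HC.
Qed.
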